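(* Let $V\neq\{0\}$ be a vector space over a field $F$ and let $T:V\to V$ have a vanishing polynomial, with minimal polynomial $p$. (1) If $T$ is nilpotent and is $\gamma$-homogeneous or absolutely $\gamma$-homogeneous, then $0$ is the only eigenvalue of $T$ (and it is the only root of $p$). (2) If $T$ is not nilpotent and $F$ is infinite, then for $\gamma\notin\{0,1\}$, $T$ is neither $\gamma$-homogeneous, nor absolutely $\gamma$-homogeneous, nor positively $\gamma$-homogeneous. (3) If $T$ is $1$-homogeneous and $|F|>2$, then $p(\lambda)=0$ for every eigenvalue $\lambda$ of $T$. If $T$ is absolutely $1$-homogeneous, then $p(0)=0$ and $p(|\lambda|)=0$ for every eigenvalue $\lambda$ of $T$. (4) Let $T$ be $0$-homogeneous, absolutely $0$-homogeneous, or positively $0$-homogeneous. If $p(1)\neq0$, then the only possible eigenvalue of $T$ is $0$ (in the positively homogeneous case: the only possible nonnegative eigenvalue is $0$). Moreover $p(0)=0$, except possibly in the case of (plain) $0$-homogeneity with $|F|=2$.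
   Context: $T^0=I$, $T^i=T\circ T^{i-1}$; $p(T)(v)=\sum a_iT^i(v)$. A vanishing polynomial of $T$ is a nonzero $p\in F[x]$ with $p(T)(v)=0$ for all $v$; the minimal polynomial is the unique monic one of least degree. $T$ is nilpotent if $T^m=0$ for some $m$. A vector $0\neq v$ is an eigenvector with eigenvalue $\lambda\in F$ if $T(v)=\lambda v$. For $\gamma\in\mathbb{N}$, $T$ is $\gamma$-homogeneous if $T(av)=a^\gamma T(v)$ for all $0\neq a\in F$, $v\in V$. For $F=\mathbb{R}$ or $\mathbb{C}$ and $\gamma\ge0$ real, $T$ is absolutely $\gamma$-homogeneous if $T(av)=|a|^\gamma T(v)$ for all $a\neq0$, $v\in V$. For $F=\mathbb{R}$ and $\gamma\ge0$, $T$ is positively $\gamma$-homogeneous if $T(av)=a^\gamma T(v)$ for all $a>0$, $v\in V$. *)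

From mathcomp Require Import all_boot all_algebra.
From mathcomp Require Export complex.
From mathcomp Require Export reals exp.
Export GRing.Theory Num.Theory.

Set Implicit Arguments.
Unset Strict Implicit.
Unset Printing Implicit Defensive.

Local Open Scope ring_scope.

Section GeneralField.
Variables (F : fieldType) (V : lmodType F).

(* T^i = iter i T  (T^0 = id, T^i = T o T^(i-1));  T : V -> V is an arbitrary map *)
Definition poly_app (p : {poly F}) (T : V -> V) (v : V) : V :=
  \sum_(i < size p) p`_i *: iter i T v.

Definition vanishing_poly_of (T : V -> V) (p : {poly F}) : Prop :=
  p != 0 /\ forall v : V, poly_app p T v = 0.

Definition minpoly_of (T : V -> V) (p : {poly F}) : Prop :=
  p \is monic /\ vanishing_poly_of T p /\
  forall q : {poly F}, vanishing_poly_of T q -> (size p <= size q)%N.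

Definition nilpotent_map (T : V -> V) : Prop :=
  exists m : nat, forall v : V, iter m T v = 0.

Definition eigenvalue_of (T : V -> V) (lam : F) : Prop :=
  exists v : V, v != 0 /\ T v = lam *: v.

Definition homogeneous_of (gamma : nat) (T : V -> V) : Prop :=
  forall (a : F) (v : V), a != 0 -> T (a *: v) = a ^+ gamma *: T v.

End GeneralField.

Definition abs_homogeneous_R (R : realType) (V : lmodType R) (gamma : R)
    (T : V -> V) : Prop :=
  forall (a : R) (v : V), a != 0 -> T (a *: v) = (`|a| `^ gamma) *: T v.

Definition abs_homogeneous_C (R : realType) (V : lmodType R[i]) (gamma : R)
    (T : V -> V) : Prop :=
  forall (a : R[i]) (v : V), a != 0 ->
    T (a *: v) = ((Normc.normc a) `^ gamma)%:C%C *: T v.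

Definition pos_homogeneous (R : realType) (V : lmodType R) (gamma : R)
    (T : V -> V) : Prop :=
  forall (a : R) (v : V), 0 < a -> T (a *: v) = (a `^ gamma) *: T v.

Definition infinite_type (F : eqType) : Prop :=
  forall s : seq F, exists x : F, x \notin s.

Definition card_gt2 (F : eqType) : Prop :=
  exists x y z : F, [/\ x != y, x != z & y != z].

From mathcomp Require Import all_boot all_order all_algebra.
From mathcomp Require Import complex reals exp.
Import Order.TTheory GRing.Theory Num.Theory.
Local Open Scope ring_scope.
Set Implicit Arguments.
Unset Strict Implicit.
Unset Printing Implicit Defensive.

(* A vanishing polynomial p of T satisfies p(mu) w = 0 whenever w <> 0 and the
   iterates of T act on w as powers of mu; the homogeneity assumptions produce
   such vectors (lam v for the eigenvalue |lam| under absolute 1-homogeneity,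
   lam v for the eigenvalue 1 under 0-homogeneity), and T (a v) = T v with
   a <> 1 forces p(0) = 0.  If T is nilpotent, downward induction from the
   lowest nonzero coefficient p_a gives T^a = 0, so the minimal polynomial is
   X^a.  For gamma outside {0, 1}, homogeneity gives
   p(T)(a v) = sum_i a^(gamma^i) p_i T^i v = 0 for all admissible scalars a;
   the maps a |-> a^(gamma^i) are pairwise distinct multiplicative characters,
   so by Artin's independence lemma every p_i T^i v vanishes, and the leading
   term makes T nilpotent. *)

Section VanishingPolynomial.
Variables (F : fieldType) (V : lmodType F) (T : V -> V) (p : {poly F}).

Lemma poly_app_Xn n v : poly_app 'X^n T v = iter n T v.
Proof.
rewrite /poly_app size_polyXn big_ord_recr /= big1 ?add0r => [|i _].
  by rewrite coefXn eqxx scale1r.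
by rewrite coefXn ltn_eqF ?scale0r.
Qed.

Lemma iter_eigen mu w : T w = mu *: w ->
  (forall i, T (mu ^+ i *: w) = mu ^+ i *: T w) ->
  forall i, iter i T w = mu ^+ i *: w.
Proof.
move=> Tw Tmu; elim=> [|i IHi]; first by rewrite scale1r.
by rewrite iterS IHi Tmu Tw scalerA -exprSr.
Qed.

Lemma poly_app_eigen mu w : (forall i, iter i T w = mu ^+ i *: w) ->
  poly_app p T w = p.[mu] *: w.
Proof.
move=> Tw; rewrite /poly_app horner_coef scaler_suml.
by apply: eq_bigr => i _; rewrite Tw scalerA.
Qed.

Lemma poly_app_subr x y : T x = T y ->
  poly_app p T x - poly_app p T y = p`_0 *: (x - y).
Proof.
move=> Txy; rewrite /poly_app -sumrB.
case E: (size p) => [|n]; first by rewrite big_ord0 nth_default ?E ?scale0r.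
rewrite big_ord_recl scalerBr big1 ?addr0 // => i _.
by rewrite lift0 !iterSr Txy subrr.
Qed.

Hypothesis p_vanishing : vanishing_poly_of T p.

Lemma vanishing_root_eigen mu w : w != 0 -> T w = mu *: w ->
  (forall i, T (mu ^+ i *: w) = mu ^+ i *: T w) -> root p mu.
Proof.
move=> w_nz Tw Tmu; have := p_vanishing.2 w.
rewrite (poly_app_eigen (iter_eigen Tw Tmu)) => /eqP.
by rewrite scaler_eq0 (negbTE w_nz) orbF.
Qed.

Lemma vanishing_root0_shift a v : v != 0 -> a != 1 -> T (a *: v) = T v -> root p 0.
Proof.
move=> v_nz a1 Tav.
have := poly_app_subr Tav; rewrite !p_vanishing.2 subrr => /esym/eqP.
rewrite -{2}[v]scale1r -scalerBl !scaler_eq0 subr_eq0 (negbTE a1) (negbTE v_nz) !orbF.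
by rewrite rootE horner_coef0.
Qed.

Lemma vanishing_root1_scale_invariant lam v : lam != 0 -> v != 0 -> T v = lam *: v ->
  T (lam *: v) = T v -> root p 1.
Proof.
move=> lam_nz v_nz Tv Tlamv.
have lamv_nz : lam *: v != 0 by rewrite scaler_eq0 negb_or lam_nz.
apply: (vanishing_root_eigen lamv_nz) => [|i]; first by rewrite Tlamv Tv scale1r.
by rewrite expr1n !scale1r.
Qed.

End VanishingPolynomial.

Section Nilpotent.
Variables (F : fieldType) (V : lmodType F) (T : V -> V).

Definition weakly_homogeneous := forall (c : F) (v : V), c != 0 ->
  exists2 d : F, d != 0 & T (c *: v) = d *: T v.

Lemma nilpotent_eigenvalue0 : (exists v : V, v != 0) -> nilpotent_map T ->
  eigenvalue_of T 0.
Proof.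
move=> [v v_nz] [m /(_ v)]; elim: m v v_nz => [|m IHm] v v_nz.
  by move=> /= v0; rewrite v0 eqxx in v_nz.
rewrite iterSr; have [Tv0 _|Tv_nz] := eqVneq (T v) 0; last exact: IHm.
by exists v; rewrite Tv0 scale0r.
Qed.

Lemma nilpotent_eigenvalue_eq0 lam : nilpotent_map T -> weakly_homogeneous ->
  eigenvalue_of T lam -> lam = 0.
Proof.
move=> [m Tm] hom [v [v_nz Tv]]; apply/eqP; apply: contraT => lam_nz.
have iterTv i : exists2 c, c != 0 & iter i T v = c *: v.
  elim: i => [|i [c c_nz Tiv]]; first by exists 1; rewrite ?oner_eq0 ?scale1r.
  have [d d_nz Tcv] := hom c v c_nz.
  by exists (d * lam); rewrite ?mulf_neq0 // iterS Tiv Tcv Tv scalerA.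
have [c c_nz Tmv] := iterTv m.
by have /eqP := Tm v; rewrite Tmv scaler_eq0 (negbTE c_nz) (negbTE v_nz).
Qed.

Lemma vanishing_lowest_coef_iter p a k : vanishing_poly_of T p -> p`_a != 0 ->
  (forall i, (i < a)%N -> p`_i = 0) ->
  (forall w, iter (a + k.+1) T w = 0) -> forall w, iter (a + k) T w = 0.
Proof.
move=> [_ p_van] pa low Tak w.
have a_lt : (a < size p)%N by rewrite ltnNge; apply: contra pa => /(nth_default 0) ->.
have := p_van (iter k T w); rewrite /poly_app (bigD1 (Ordinal a_lt)) //= big1 ?addr0.
  by rewrite -iterD => /eqP; rewrite scaler_eq0 (negbTE pa) => /eqP.
move=> i ia; have [ilta|alei] := ltnP i a; first by rewrite low ?scale0r.
have alti : (a < i)%N by rewrite ltn_neqAle alei andbT eq_sym.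
have i_k : (i + k = a + k.+1 + (i - a.+1))%N by rewrite addnS -addSn addnAC subnKC.
by rewrite -iterD i_k iterD Tak scaler0.
Qed.

Lemma nilpotent_lowest_coef_iter p a : nilpotent_map T -> vanishing_poly_of T p ->
  p`_a != 0 -> (forall i, (i < a)%N -> p`_i = 0) -> forall w, iter a T w = 0.
Proof.
move=> [m Tm] p_van pa low.
suff: forall k, (forall w, iter (a + k) T w = 0) -> forall w, iter a T w = 0.
  by move=> /(_ m); apply=> w; rewrite addnC iterD Tm.
elim=> [|k IHk] Tak; first by rewrite addn0 in Tak.
exact/IHk/(vanishing_lowest_coef_iter p_van pa low).
Qed.

Lemma nilpotent_minpolyE p : (exists v : V, v != 0) -> minpoly_of T p ->
  nilpotent_map T -> exists2 n, (0 < n)%N & p = 'X^n.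
Proof.
move=> [v v_nz] [p_monic [p_van p_min]] nilT.
have p_nz : exists n, p`_n != 0.
  by exists (size p).-1; rewrite -lead_coefE lead_coef_eq0 monic_neq0.
case: (ex_minnP p_nz) => a pa a_min.
have low i : (i < a)%N -> p`_i = 0.
  by move=> ia; apply/eqP; apply: contraTT ia => /a_min; rewrite -leqNgt.
have Ta := nilpotent_lowest_coef_iter nilT p_van pa low.
have Xa_van : vanishing_poly_of T 'X^a.
  by split=> [|w]; rewrite ?monic_neq0 ?monicXn // poly_app_Xn Ta.
have size_p : size p = a.+1.
  apply/eqP; rewrite eqn_leq -{1}(size_polyXn F a) p_min //=.
  by rewrite ltnNge; apply: contra pa => /(nth_default 0) ->.
exists a.
  by rewrite lt0n; apply: contra v_nz => /eqP a0; rewrite -[v]/(iter 0 T v) -a0 Ta.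
apply/polyP => i; rewrite coefXn; case: ltngtP => [ia|ai|->].
- by rewrite low.
- by rewrite nth_default // size_p.
- by have /monicP := p_monic; rewrite lead_coefE size_p.
Qed.

Lemma nilpotent_spectrum p : (exists v : V, v != 0) -> minpoly_of T p ->
  nilpotent_map T -> weakly_homogeneous ->
  [/\ eigenvalue_of T 0, (forall lam, eigenvalue_of T lam -> lam = 0),
      root p 0 & (forall x, root p x -> x = 0)].
Proof.
move=> V_nz p_min nilT hom; have [n n_gt0 ->] := nilpotent_minpolyE V_nz p_min nilT.
split=> [| lam | | x]; rewrite ?rootE ?hornerXn.
- exact: nilpotent_eigenvalue0.
- exact: nilpotent_eigenvalue_eq0.
- by rewrite expr0n eqn0Ngt n_gt0.
- by rewrite expf_eq0 => /andP[_ /eqP].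
Qed.

End Nilpotent.

Lemma homogeneous_weakly (F : fieldType) (V : lmodType F) (g : nat) (T : V -> V) :
  homogeneous_of g T -> weakly_homogeneous T.
Proof. by move=> hom c v c_nz; exists (c ^+ g); rewrite ?expf_neq0 ?hom. Qed.

Section IndependentCharacters.
Variables (K : fieldType) (W : lmodType K) (A : nzRingType) (S : {pred A}).
Variable chi : nat -> A -> K.
Hypotheses (S1 : 1 \in S) (SM : forall a b, a \in S -> b \in S -> a * b \in S).
Hypothesis chiM : forall i a b, a \in S -> b \in S -> chi i (a * b) = chi i a * chi i b.
Hypothesis chi_neq0 : forall i a, a \in S -> chi i a != 0.
Hypothesis chi_sep : forall i j, i != j -> exists2 b, b \in S & chi i b != chi j b.

Lemma characters_independent n (u : nat -> W) :
  (forall a, a \in S -> \sum_(i < n) chi i a *: u i = 0) ->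
  forall i, (i < n)%N -> u i = 0.
Proof.
elim: n u => [//|n IHn] u Hu.
have low j : (j < n)%N -> u j = 0.
  move=> jn; have [b Sb chi_jn] := chi_sep (negbT (ltn_eqF jn)).
  pose u' k := (chi k b - chi n b) *: u k.
  suff /(IHn u')/(_ j jn)/eqP : forall a, a \in S -> \sum_(k < n) chi k a *: u' k = 0.
    by rewrite scaler_eq0 subr_eq0 (negbTE chi_jn) => /eqP.
  (* subtract [chi n b] times the relation at [a] from the relation at [a * b] *)
  move=> a Sa; transitivity (\sum_(k < n.+1) chi k (a * b) *: u k -
                             chi n b *: \sum_(k < n.+1) chi k a *: u k).
    rewrite scaler_sumr -sumrB big_ord_recr /= chiM // scalerA [chi n b * _]mulrC.
    rewrite subrr addr0; apply: eq_bigr => k _.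
    by rewrite /u' chiM // !scalerA -scalerBl mulrBr [chi n b * _]mulrC.
  by rewrite Hu ?SM // Hu // scaler0 subrr.
have := Hu 1 S1; rewrite big_ord_recr /= big1 ?add0r => [/eqP|k _]; last first.
  by rewrite low ?scaler0.
rewrite scaler_eq0 (negbTE (chi_neq0 _ S1)) /= => /eqP un i.
by rewrite ltnS leq_eqVlt => /orP[/eqP ->|/low].
Qed.

Lemma nilpotent_of_character_scaling (T : W -> W) (p : {poly K}) (emb : A -> K) :
  vanishing_poly_of T p ->
  (forall i a w, a \in S -> iter i T (emb a *: w) = chi i a *: iter i T w) ->
  nilpotent_map T.
Proof.
move=> [p_nz p_van] Tchi; exists (size p).-1 => v.
have rel a : a \in S -> \sum_(i < size p) chi i a *: (p`_i *: iter i T v) = 0.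
  move=> Sa; rewrite -[RHS](p_van (emb a *: v)); apply: eq_bigr => i _.
  by rewrite Tchi // !scalerA mulrC.
have size_p : ((size p).-1 < size p)%N by rewrite ltn_predL size_poly_gt0.
have /eqP := @characters_independent _ (fun i => p`_i *: iter i T v) rel _ size_p.
by rewrite -lead_coefE scaler_eq0 lead_coef_eq0 (negbTE p_nz) => /eqP.
Qed.

End IndependentCharacters.

Lemma infinite_exists_nonroot (F : fieldType) (q : {poly F}) :
  infinite_type F -> q != 0 -> exists2 b, b != 0 & ~~ root q b.
Proof.
move=> infF q_nz.
have [s [s_uniq s_size s0]] : exists s : seq F, [/\ uniq s, size s = size q & 0 \notin s].
  elim: (size q) => [|n [s [s_uniq s_size s0]]]; first by exists [::].
  have [x] := infF (0 :: s); rewrite in_cons negb_or => /andP[x0 xs].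
  by exists (x :: s); split; rewrite /= ?xs ?s_size // in_cons negb_or eq_sym x0.
have /allPn[b bs qb] : ~~ all (root q) s.
  by apply: contraT => /negbNE/(max_poly_roots q_nz)/(_ s_uniq); rewrite s_size ltnn.
by exists b => //; apply: contraNneq s0 => <-.
Qed.

Lemma infinite_exists_expr_neq (F : fieldType) (e1 e2 : nat) :
  infinite_type F -> e1 != e2 -> exists2 b : F, b != 0 & b ^+ e1 != b ^+ e2.
Proof.
move=> infF e12; have q_nz : 'X^e1 - 'X^e2 != 0 :> {poly F}.
  rewrite subr_eq0; apply: contra e12 => /eqP Xe.
  by have := congr1 (fun q : {poly F} => size q) Xe; rewrite !size_polyXn => -[->].
have [b b_nz] := infinite_exists_nonroot infF q_nz.
by rewrite rootE !hornerE subr_eq0; exists b.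
Qed.

Lemma homogeneous_nilpotent (F : fieldType) (V : lmodType F) (T : V -> V) (p : {poly F})
    (g : nat) :
  vanishing_poly_of T p -> infinite_type F -> (1 < g)%N -> homogeneous_of g T ->
  nilpotent_map T.
Proof.
move=> p_van infF g_gt1 hom.
apply: (@nilpotent_of_character_scaling _ _ _ [pred a : F | a != 0]
  (fun i a => a ^+ (g ^ i)) _ _ _ _ _ T p id p_van).
- by rewrite inE oner_eq0.
- by move=> a b; rewrite !inE; apply: mulf_neq0.
- by move=> i a b _ _; rewrite exprMn.
- by move=> i a; rewrite inE; apply: expf_neq0.
- by move=> i j ij; apply: infinite_exists_expr_neq; rewrite ?(inj_eq (expnI g_gt1)).
elim=> [|i IHi] a w a_nz /=; first by rewrite expn0 expr1.
by rewrite IHi // hom ?expf_neq0 // -exprM expnSr.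
Qed.

Lemma powR2_inj (R : realType) : injective (@powR R 2).
Proof.
move=> x y /(congr1 (@ln R)); rewrite !ln_powR; apply: mulIf.
by rewrite gt_eqF // ln_gt0 // ltr1n.
Qed.

Lemma pos_homogeneous_nilpotent (R : realType) (K : fieldType) (phi : {rmorphism R -> K})
    (V : lmodType K) (T : V -> V) (p : {poly K}) (g : R) :
  vanishing_poly_of T p -> 0 < g -> g != 1 ->
  (forall t w, 0 < t -> T (phi t *: w) = phi (t `^ g) *: T w) -> nilpotent_map T.
Proof.
move=> p_van g_gt0 g1 hom.
apply: (@nilpotent_of_character_scaling _ _ _ [pred t : R | 0 < t]
  (fun i t => phi (t `^ (g ^+ i))) _ _ _ _ _ T p phi p_van).
- by rewrite inE ltr01.
- by move=> a b; rewrite !inE; apply: mulr_gt0.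
- by move=> i a b a_gt0 b_gt0; rewrite powRM ?ltW // rmorphM.
- by move=> i a a_gt0; rewrite fmorph_eq0 gt_eqF // powR_gt0.
- move=> i j ij; exists 2; first by rewrite inE ltr0n.
  by rewrite (inj_eq (fmorph_inj phi)) (inj_eq (@powR2_inj R)) (inj_eq (ieexprIn g_gt0 g1)).
elim=> [|i IHi] t w t_gt0 /=; first by rewrite expr0 powRr1 ?ltW.
by rewrite IHi // hom ?powR_gt0 // -powRrM -exprSr.
Qed.

Lemma card_gt2_exists_neq01 (F : fieldType) : card_gt2 F -> exists2 a : F, a != 0 & a != 1.
Proof.
move=> [x [y [z [xy xz yz]]]].
have [x0|x_nz] := eqVneq x 0; last have [x1|x_neq1] := eqVneq x 1; last by exists x.
- subst x; have [y1|y_neq1] := eqVneq y 1; last by exists y; rewrite // eq_sym.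
  by subst y; exists z; rewrite eq_sym.
- subst x; have [y0|y_nz] := eqVneq y 0; last by exists y; rewrite // eq_sym.
  by subst y; exists z; rewrite eq_sym.
Qed.

Lemma homogeneous1_root_eigenvalue (F : fieldType) (V : lmodType F) (T : V -> V)
    (p : {poly F}) :
  vanishing_poly_of T p -> homogeneous_of 1 T -> (exists2 a : F, a != 0 & a != 1) ->
  forall lam, eigenvalue_of T lam -> root p lam.
Proof.
move=> p_van hom [a a_nz a1] lam [v [v_nz Tv]].
have T0 : T 0 = 0.
  have /eqP := hom a 0 a_nz; rewrite scaler0 expr1 -subr_eq0 -{1}[T 0]scale1r -scalerBl.
  by rewrite scaler_eq0 subr_eq0 eq_sym (negbTE a1) => /eqP.
apply: (vanishing_root_eigen p_van v_nz Tv) => i.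
have [->|lami_nz] := eqVneq (lam ^+ i) 0; first by rewrite !scale0r T0.
by rewrite hom // expr1.
Qed.

Lemma abs1_homogeneous_roots (K : numFieldType) (V : lmodType K) (T : V -> V)
    (p : {poly K}) :
  (exists v : V, v != 0) -> vanishing_poly_of T p ->
  (forall a v, a != 0 -> T (a *: v) = `|a| *: T v) ->
  root p 0 /\ forall lam, eigenvalue_of T lam -> root p `|lam|.
Proof.
move=> [v0 v0_nz] p_van hom.
have root0 : root p 0.
  apply: (vanishing_root0_shift p_van (a := -1) v0_nz).
    by rewrite lt_eqF // (lt_trans _ ltr01) // ltrN10.
  by rewrite hom ?oppr_eq0 ?oner_eq0 // normrN1 scale1r.
split=> // lam [v [v_nz Tv]]; have [->|lam_nz] := eqVneq lam 0; first by rewrite normr0.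
have lamv_nz : lam *: v != 0 by rewrite scaler_eq0 negb_or lam_nz.
apply: (vanishing_root_eigen p_van lamv_nz); first by rewrite hom // Tv.
by move=> i; rewrite hom ?expf_neq0 ?normr_eq0 // normrX normr_id.
Qed.

Lemma homogeneous0_roots (F : fieldType) (V : lmodType F) (T : V -> V) (p : {poly F}) :
  (exists v : V, v != 0) -> vanishing_poly_of T p -> homogeneous_of 0 T ->
  (~ root p 1 -> forall lam, eigenvalue_of T lam -> lam = 0) /\
  ((exists2 a : F, a != 0 & a != 1) -> root p 0).
Proof.
move=> [v0 v0_nz] p_van hom; have Tinv a v : a != 0 -> T (a *: v) = T v.
  by move=> a_nz; rewrite hom // expr0 scale1r.
split=> [p1 lam [v [v_nz Tv]] | [a a_nz a1]].
  apply/eqP; apply: contraT => lam_nz; case: p1.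
  exact: (vanishing_root1_scale_invariant p_van lam_nz v_nz Tv (Tinv _ _ lam_nz)).
exact: (vanishing_root0_shift p_van v0_nz a1 (Tinv _ _ a_nz)).
Qed.

Lemma pos_homogeneous0_roots (R : realType) (V : lmodType R) (T : V -> V) (p : {poly R}) :
  (exists v : V, v != 0) -> vanishing_poly_of T p -> pos_homogeneous 0 T ->
  (~ root p 1 -> forall lam, eigenvalue_of T lam -> 0 <= lam -> lam = 0) /\ root p 0.
Proof.
move=> [v0 v0_nz] p_van hom; have Tinv a v : 0 < a -> T (a *: v) = T v.
  by move=> a_gt0; rewrite hom // powRr0 scale1r.
split=> [p1 lam [v [v_nz Tv]] lam_ge0 | ].
  apply/eqP; apply: contraT => lam_nz; case: p1.
  have lam_gt0 : 0 < lam by rewrite lt_def lam_nz.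
  exact: (vanishing_root1_scale_invariant p_van lam_nz v_nz Tv (Tinv _ _ lam_gt0)).
apply: (vanishing_root0_shift p_van (a := 2) v0_nz); last by rewrite Tinv ?ltr0n.
by rewrite gt_eqF // ltr1n.
Qed.

Section AbsoluteHomogeneityReal.
Variables (R : realType) (V : lmodType R) (T : V -> V).

Lemma abs_homogeneous_R_weakly g : abs_homogeneous_R g T -> weakly_homogeneous T.
Proof.
move=> hom c v c_nz; exists (`|c| `^ g); last exact: hom.
by rewrite powR_eq0 normr_eq0 (negbTE c_nz).
Qed.

Lemma abs_homogeneous_R_pos g : abs_homogeneous_R g T -> pos_homogeneous g T.
Proof. by move=> hom t v t_gt0; rewrite hom ?gt_eqF // gtr0_norm. Qed.

Lemma abs_homogeneous_R_norm :
  abs_homogeneous_R 1 T -> forall a v, a != 0 -> T (a *: v) = `|a| *: T v.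
Proof. by move=> hom a v a_nz; rewrite hom // powRr1. Qed.

Lemma abs_homogeneous_R0 : abs_homogeneous_R 0 T -> homogeneous_of 0 T.
Proof. by move=> hom a v a_nz; rewrite hom // powRr0 expr0. Qed.

End AbsoluteHomogeneityReal.

Section AbsoluteHomogeneityComplex.
Variables (R : realType) (V : lmodType R[i]) (T : V -> V).

Lemma normc_ge0 (a : R[i]) : 0 <= Normc.normc a.
Proof. by case: a => x y; apply: sqrtr_ge0. Qed.

Lemma normc_real (t : R) : 0 <= t -> Normc.normc t%:C%C = t.
Proof. by move=> t_ge0; rewrite /Normc.normc /= expr0n addr0 sqrtr_sqr ger0_norm. Qed.

Lemma abs_homogeneous_C_weakly g : abs_homogeneous_C g T -> weakly_homogeneous T.
Proof.
move=> hom c v c_nz; exists ((Normc.normc c `^ g)%:C%C); last exact: hom.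
rewrite fmorph_eq0 powR_eq0 negb_and; apply/orP; left.
by apply: contra_neq c_nz; apply: Normc.eq0_normc.
Qed.

Lemma abs_homogeneous_C_real g : abs_homogeneous_C g T ->
  forall t w, 0 < t -> T ((real_complex R) t *: w) = (real_complex R) (t `^ g) *: T w.
Proof.
by move=> hom t w t_gt0; rewrite hom ?fmorph_eq0 ?gt_eqF // normc_real ?ltW.
Qed.

Lemma abs_homogeneous_C_norm :
  abs_homogeneous_C 1 T -> forall a v, a != 0 -> T (a *: v) = `|a| *: T v.
Proof. by move=> hom a v a_nz; rewrite hom // powRr1 ?normc_ge0. Qed.

Lemma abs_homogeneous_C0 : abs_homogeneous_C 0 T -> homogeneous_of 0 T.
Proof. by move=> hom a v a_nz; rewrite hom // powRr0 expr0. Qed.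

End AbsoluteHomogeneityComplex.

Theorem mainTheorem18 :
  (forall (F : fieldType) (V : lmodType F) (T : V -> V) (p : {poly F}) (gamma : nat),
     (exists v : V, v != 0) -> minpoly_of T p ->
     nilpotent_map T -> homogeneous_of gamma T ->
     [/\ eigenvalue_of T 0, (forall lam, eigenvalue_of T lam -> lam = 0),
         root p 0 & (forall x, root p x -> x = 0)]) /\
  (forall (R : realType) (V : lmodType R) (T : V -> V) (p : {poly R}) (gamma : R),
     (exists v : V, v != 0) -> minpoly_of T p -> 0 <= gamma ->
     nilpotent_map T -> abs_homogeneous_R gamma T ->
     [/\ eigenvalue_of T 0, (forall lam, eigenvalue_of T lam -> lam = 0),
         root p 0 & (forall x, root p x -> x = 0)]) /\
  (forall (R : realType) (V : lmodType R[i]) (T : V -> V) (p : {poly R[i]}) (gamma : R),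
     (exists v : V, v != 0) -> minpoly_of T p -> 0 <= gamma ->
     nilpotent_map T -> abs_homogeneous_C gamma T ->
     [/\ eigenvalue_of T 0, (forall lam, eigenvalue_of T lam -> lam = 0),
         root p 0 & (forall x, root p x -> x = 0)]) /\
  (forall (F : fieldType) (V : lmodType F) (T : V -> V) (p : {poly F}) (gamma : nat),
     (exists v : V, v != 0) -> minpoly_of T p ->
     ~ nilpotent_map T -> infinite_type F -> gamma != 0%N -> gamma != 1%N ->
     ~ homogeneous_of gamma T) /\
  (forall (R : realType) (V : lmodType R) (T : V -> V) (p : {poly R}) (gamma : R),
     (exists v : V, v != 0) -> minpoly_of T p ->
     ~ nilpotent_map T -> 0 <= gamma -> gamma != 0 -> gamma != 1 ->
     ~ abs_homogeneous_R gamma T /\ ~ pos_homogeneous gamma T) /\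
  (forall (R : realType) (V : lmodType R[i]) (T : V -> V) (p : {poly R[i]}) (gamma : R),
     (exists v : V, v != 0) -> minpoly_of T p ->
     ~ nilpotent_map T -> 0 <= gamma -> gamma != 0 -> gamma != 1 ->
     ~ abs_homogeneous_C gamma T) /\
  (forall (F : fieldType) (V : lmodType F) (T : V -> V) (p : {poly F}),
     (exists v : V, v != 0) -> minpoly_of T p ->
     homogeneous_of 1 T -> card_gt2 F ->
     forall lam, eigenvalue_of T lam -> root p lam) /\
  (forall (R : realType) (V : lmodType R) (T : V -> V) (p : {poly R}),
     (exists v : V, v != 0) -> minpoly_of T p ->
     abs_homogeneous_R 1 T ->
     root p 0 /\ forall lam, eigenvalue_of T lam -> root p `|lam|) /\
  (forall (R : realType) (V : lmodType R[i]) (T : V -> V) (p : {poly R[i]}),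
     (exists v : V, v != 0) -> minpoly_of T p ->
     abs_homogeneous_C 1 T ->
     root p 0 /\ forall lam, eigenvalue_of T lam -> root p `|lam|) /\
  (forall (F : fieldType) (V : lmodType F) (T : V -> V) (p : {poly F}),
     (exists v : V, v != 0) -> minpoly_of T p ->
     homogeneous_of 0 T ->
     (~ root p 1 -> forall lam, eigenvalue_of T lam -> lam = 0) /\
     (card_gt2 F -> root p 0)) /\
  (forall (R : realType) (V : lmodType R) (T : V -> V) (p : {poly R}),
     (exists v : V, v != 0) -> minpoly_of T p ->
     abs_homogeneous_R 0 T ->
     (~ root p 1 -> forall lam, eigenvalue_of T lam -> lam = 0) /\ root p 0) /\
  (forall (R : realType) (V : lmodType R[i]) (T : V -> V) (p : {poly R[i]}),
     (exists v : V, v != 0) -> minpoly_of T p ->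
     abs_homogeneous_C 0 T ->
     (~ root p 1 -> forall lam, eigenvalue_of T lam -> lam = 0) /\ root p 0) /\
  (forall (R : realType) (V : lmodType R) (T : V -> V) (p : {poly R}),
     (exists v : V, v != 0) -> minpoly_of T p ->
     pos_homogeneous 0 T ->
     (~ root p 1 -> forall lam, eigenvalue_of T lam -> 0 <= lam -> lam = 0) /\ root p 0).
Proof.
have two_neq01 (K : numFieldType) : exists2 a : K, a != 0 & a != 1.
  by exists 2; rewrite ?pnatr_eq0 // gt_eqF // ltr1n.
repeat match goal with |- _ /\ _ => split end.
- move=> F V T p g V_nz p_min nilT /homogeneous_weakly; exact: nilpotent_spectrum.
- move=> R V T p g V_nz p_min _ nilT /abs_homogeneous_R_weakly; exact: nilpotent_spectrum.
- move=> R V T p g V_nz p_min _ nilT /abs_homogeneous_C_weakly; exact: nilpotent_spectrum.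
- move=> F V T p g _ p_min nilT infF g0 g1.
  have g_gt1 : (1 < g)%N by rewrite ltn_neqAle eq_sym g1 lt0n.
  by move/(homogeneous_nilpotent p_min.2.1 infF g_gt1).
- move=> R V T p g _ p_min nilT g_ge0 g0 g1; have g_gt0 : 0 < g by rewrite lt_def g0.
  have nil_of := @pos_homogeneous_nilpotent R R idfun _ T p g p_min.2.1 g_gt0 g1.
  by split=> [/abs_homogeneous_R_pos|] /nil_of.
- move=> R V T p g _ p_min nilT g_ge0 g0 g1; have g_gt0 : 0 < g by rewrite lt_def g0.
  by move/abs_homogeneous_C_real/(pos_homogeneous_nilpotent p_min.2.1 g_gt0 g1).
- move=> F V T p _ p_min hom /card_gt2_exists_neq01.
  exact: homogeneous1_root_eigenvalue p_min.2.1 hom.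
- move=> R V T p V_nz p_min /abs_homogeneous_R_norm.
  exact: abs1_homogeneous_roots V_nz p_min.2.1.
- move=> R V T p V_nz p_min /abs_homogeneous_C_norm.
  exact: abs1_homogeneous_roots V_nz p_min.2.1.
- move=> F V T p V_nz p_min hom.
  have [eig0 root0] := homogeneous0_roots V_nz p_min.2.1 hom.
  by split=> // /card_gt2_exists_neq01.
- move=> R V T p V_nz p_min /abs_homogeneous_R0 hom.
  have [eig0 root0] := homogeneous0_roots V_nz p_min.2.1 hom.
  by split=> //; apply/root0/two_neq01.
- move=> R V T p V_nz p_min /abs_homogeneous_C0 hom.
  have [eig0 root0] := homogeneous0_roots V_nz p_min.2.1 hom.
  by split=> //; apply/root0/two_neq01.
- move=> R V T p V_nz p_min; exact: pos_homogeneous0_roots V_nz p_min.2.1.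
Qed.
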